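(* There is a constant $C>0$ independent of $h$ such that, for $h$ sufficiently small, the solution $u^h$ of the hybrid discrete problem $$F_h(u^h)(x)=0\ \text{for } x\in\Omega^h_0,\qquad u^h=r_h(g)\ \text{on }\partial\Omega^h,$$ lying in $B_\rho(r_h(u))$ with $\rho=C_*h^{2+n/2}$ (the fixed point of $S$), satisfies $|u^h|_{\Omega^h_0}\le C$.
   Context: Setting. Let $n\ge 2$, $\Omega=(0,1)^n$, $f\in C(\overline\Omega)$ with $f>0$, and $g\in C(\partial\Omega)$ admitting a convex extension $\tilde g\in C(\overline\Omega)$. Let $u$ be the unique convex viscosity solution of $\det D^2u=f$ in $\Omega$, $u=g$ on $\partial\Omega$. Let $h>0$ with $1/h\in\mathbb Z$, $\mathbb Z_h=\{x\in\mathbb R^n: x_i/h\in\mathbb Z\ \forall i\}$, $\Omega^h=\overline\Omega\cap\mathbb Z_h$, $\Omega^h_0=\Omega\cap\mathbb Z_h$, $\partial\Omega^h=\Omega^h\setminus\Omega^h_0$. $\mathcal M(\Omega^h)$ is the set of real functions on $\Omega^h$ (mesh functions); $r_h(v)$ is the restriction of a function $v$ to the grid. For $T_h\subset\Omega^h$, $|v^h|_{T_h}=\max_{x\in T_h}|v^h(x)|$. With $e^i$ the unit vectors, $\partial^i_+v^h(x)=(v^h(x+he^i)-v^h(x))/h$, $\partial^i_-v^h(x)=(v^h(x)-v^h(x-he^i))/h$, $D_hv^h=(\partial^i_+v^h)_i$, $\operatorname{div}_h(v^{h,i})_i=\sum_i\partial^i_-v^{h,i}$, and the discrete Hessian $\mathcal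 H_dv^h=(\partial^j_-\partial^i_+v^h)_{i,j}$. Let $\Omega_r\subset\Omega$ be an open bounded convex set such that $u$ is $C^2$ in a neighborhood of every point of $\Omega_r$. Put $\Omega_r^h=\overline{\Omega_r}\cap\mathbb Z_h$, let $\Omega^h_{r,0}$ be the set of $x\in\Omega_r^h$ at which $\mathcal H_dv^h(x)$ is defined using only values at points of $\Omega_r^h$, $\partial\Omega_r^h=\Omega_r^h\setminus\Omega^h_{r,0}$, and $\Omega_s^h=\Omega^h_0\setminus\Omega^h_{r,0}$. Define $M_r[v^h]=\frac1n\operatorname{div}_h[(\operatorname{cof}\operatorname{sym}\mathcal H_dv^h)^TD_hv^h]$, where $\operatorname{sym}A=(A+A^T)/2$ and $\operatorname{cof}A$ is the cofactor matrix. For $x\in\Omega_0^h$ let $W_h(x)$ be the set of orthogonal bases $(\alpha_1,\dots,\alpha_n)$ of $\mathbb R^n$ with $x\pm\alpha_i\in\Omega^h$ for all $i$, and $$M_s^+[v^h](x)=\inf_{(\alpha_1,\dots,\alpha_n)\in W_h(x)}\prod_{i=1}^n\max\Big(\tfrac{v^h(x+\alpha_i)-2v^h(x)+v^h(x-\alpha_i)}{|\alpha_i|^2},0\Big).$$ The hybrid operator is $F_h(v^h)(x)=M_s^+[v^h](x)-f(x)$ for $x\in\Omega_s^h$ and $F_h(v^h)(x)=M_r[v^h](x)-f(x)$ for $x\in\Omega^h_{r,0}$. Let $\Delta_h=\operatorname{div}_hD_h$ and define the linear operator $L_h$ on $\mathcal M(\Omega^h)$ by $L_hv^h(x)=v^h(x)$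 for $x\in\Omega_s^h$ and $L_hv^h(x)=w^h(x)$ for $x\in\Omega^h_{r,0}$, where $w^h$ solves $\Delta_hw^h=v^h$ on $\Omega^h_{r,0}$, $w^h=0$ on $\partial\Omega^h_r$. Let $\alpha=h^{(3+n/2)/(n-1)}$ and for $\nu_1,\nu_2>0$ define $S(\alpha v^h)(x)=\alpha v^h(x)-\nu_x\alpha^nL_hF_h(v^h)(x)$, with $\nu_x=\nu_1$ for $x\in\Omega_s^h$ and $\nu_x=\nu_2$ for $x\in\Omega^h_{r,0}$. The seminorm $|v^h|_{1,h}=\big(h^n\sum_{i=1}^n\sum_{x\in\Omega^h_{r,0}}(\partial^i_+v^h(x))^2\big)^{1/2}$ only involves points of $\Omega^h_{r,0}$. For $\rho>0$, $B_\rho(r_h(u))=\{v^h\in\mathcal M(\Omega^h): |v^h-r_h(u)|_{1,h}\le\rho,\ v^h=r_h(g)\text{ on }\partial\Omega^h,\ v^h=r_h(u)\text{ on }\partial\Omega^h_{r}\}$. For $h$ small, the hybrid discrete problem has a unique solution $u^h$ in $B_\rho(r_h(u))$, $\rho=C_*h^{2+n/2}$ for a fixed constant $C_*$, with $\alpha u^h$ a fixed point of $S$ for suitable $\nu_1,\nu_2$. *)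

From Stdlib Require Import Reals Lra Lia ZArith List Classical ClassicalEpsilon.
Import ListNotations.
Open Scope R_scope.

Definition pt := list R.

Fixpoint rsum (m : nat) (F : nat -> R) : R :=
  match m with O => 0 | S p => rsum p F + F p end.

Definition edist (x y : pt) : R :=
  sqrt (fold_right Rplus 0 (map (fun p => (fst p - snd p) ^ 2) (combine x y))).

Fixpoint upd (x : pt) (i : nat) (t : R) : pt :=
  match x, i with
  | [], _ => []
  | _ :: r, O => t :: r
  | a :: r, S j => a :: upd r j t
  end.

Definition comb (t : R) (x y : pt) : pt :=
  map (fun p => t * fst p + (1 - t) * snd p) (combine x y).

Definition cube_open (n : nat) (x : pt) : Prop :=
  length x = n /\ Forall (fun t => 0 < t < 1) x.
Definition cube_closed (n : nat) (x : pt) : Prop :=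
  length x = n /\ Forall (fun t => 0 <= t <= 1) x.
Definition cube_bdry (n : nat) (x : pt) : Prop :=
  cube_closed n x /\ ~ cube_open n x.

Definition cont_on (S : pt -> Prop) (phi : pt -> R) : Prop :=
  forall x, S x -> forall eps, 0 < eps -> exists delta, 0 < delta /\
    forall y, S y -> edist x y < delta -> Rabs (phi y - phi x) < eps.

Definition convex_set (S : pt -> Prop) : Prop :=
  forall x y t, S x -> S y -> 0 <= t <= 1 -> S (comb t x y).

Definition convex_on (S : pt -> Prop) (phi : pt -> R) : Prop :=
  forall x y t, S x -> S y -> 0 <= t <= 1 ->
    phi (comb t x y) <= t * phi x + (1 - t) * phi y.

Definition open_in_Rn (n : nat) (S : pt -> Prop) : Prop :=
  forall x, S x -> exists delta, 0 < delta /\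
    forall y, length y = n -> edist x y < delta -> S y.

Definition closure_in_Rn (n : nat) (S : pt -> Prop) (x : pt) : Prop :=
  length x = n /\ forall eps, 0 < eps -> exists y, S y /\ edist x y < eps.

Definition eball (n : nat) (x : pt) (delta : R) (y : pt) : Prop :=
  length y = n /\ edist x y < delta.

Definition partial_lim (phi : pt -> R) (i : nat) (x : pt) (l : R) : Prop :=
  derivable_pt_lim (fun t => phi (upd x i t)) (nth i x 0) l.

Definition C2_with (n : nat) (U : pt -> Prop) (phi : pt -> R)
  (D1 : nat -> pt -> R) (D2 : nat -> nat -> pt -> R) : Prop :=
  (forall x, U x -> forall i, (i < n)%nat ->
      partial_lim phi i x (D1 i x) /\
      forall j, (j < n)%nat -> partial_lim (D1 i) j x (D2 i j x)) /\
  (forall i j, (i < n)%nat -> (j < n)%nat -> cont_on U (D2 i j)).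

Definition C2_on (n : nat) (U : pt -> Prop) (phi : pt -> R) : Prop :=
  exists D1 D2, C2_with n U phi D1 D2.

Definition skip (j k : nat) : nat := if (k <? j)%nat then k else S k.

Definition minor (A : nat -> nat -> R) (i j : nat) : nat -> nat -> R :=
  fun a b => A (skip i a) (skip j b).

Fixpoint det (n : nat) (A : nat -> nat -> R) : R :=
  match n with
  | O => 1
  | S m => rsum (S m) (fun j => (-1) ^ j * A O j * det m (minor A O j))
  end.

Definition cof (n : nat) (A : nat -> nat -> R) : nat -> nat -> R :=
  fun i j => (-1) ^ (i + j) * det (n - 1) (minor A i j).

Definition local_max_at (n : nat) (w : pt -> R) (x0 : pt) : Prop :=
  exists delta, 0 < delta /\
    forall y, cube_open n y -> edist y x0 < delta -> w y <= w x0.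
Definition local_min_at (n : nat) (w : pt -> R) (x0 : pt) : Prop :=
  exists delta, 0 < delta /\
    forall y, cube_open n y -> edist y x0 < delta -> w x0 <= w y.

Definition visc_subsol (n : nat) (f u : pt -> R) : Prop :=
  forall phi D1 D2 x0, C2_with n (cube_open n) phi D1 D2 -> cube_open n x0 ->
    local_max_at n (fun y => u y - phi y) x0 ->
    f x0 <= det n (fun i j => D2 i j x0).

Definition visc_supersol (n : nat) (f u : pt -> R) : Prop :=
  forall phi D1 D2 x0, C2_with n (cube_open n) phi D1 D2 ->
    convex_on (cube_open n) phi -> cube_open n x0 ->
    local_min_at n (fun y => u y - phi y) x0 ->
    det n (fun i j => D2 i j x0) <= f x0.

Definition convex_visc_solution (n : nat) (f g u : pt -> R) : Prop :=
  cont_on (cube_closed n) u /\ convex_on (cube_closed n) u /\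
  visc_subsol n f u /\ visc_supersol n f u /\
  (forall x, cube_bdry n x -> u x = g x).

(* ---------- Grids: points are integer index vectors k, x = h k, h = 1/N ---------- *)
Definition gpt := list Z.

Definition hN (N : nat) : R := / INR N.

Definition xpt (N : nat) (k : gpt) : pt := map (fun z => IZR z * hN N) k.

Fixpoint shift (k : gpt) (i : nat) (s : Z) : gpt :=
  match k, i with
  | [], _ => []
  | a :: r, O => (a + s)%Z :: r
  | a :: r, S j => a :: shift r j s
  end.

Definition vadd (k a : gpt) : gpt := map (fun p => (fst p + snd p)%Z) (combine k a).
Definition vsub (k a : gpt) : gpt := map (fun p => (fst p - snd p)%Z) (combine k a).
Definition dotZ (a b : gpt) : Z := fold_right Z.add 0%Z (map (fun p => (fst p * snd p)%Z) (combine a b)).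

Definition Omh (n N : nat) (k : gpt) : Prop :=
  length k = n /\ Forall (fun z => (0 <= z <= Z.of_nat N)%Z) k.
Definition Omh0 (n N : nat) (k : gpt) : Prop :=
  length k = n /\ Forall (fun z => (0 < z < Z.of_nat N)%Z) k.
Definition dOmh (n N : nat) (k : gpt) : Prop := Omh n N k /\ ~ Omh0 n N k.

Fixpoint grid (n N : nat) : list gpt :=
  match n with
  | O => [[]]
  | S m => flat_map (fun z => map (cons z) (grid m N)) (map Z.of_nat (seq 0 (S N)))
  end.

Definition mesh := gpt -> R.

Definition Omrh (n N : nat) (Or : pt -> Prop) (k : gpt) : Prop :=
  Omh n N k /\ closure_in_Rn n Or (xpt N k).
(* points where H_d v is defined using only values on Omega_r^h:
   H_d v(k)_{ij} uses k, k+e_i, k-e_j, k+e_i-e_j *)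
Definition Omr0 (n N : nat) (Or : pt -> Prop) (k : gpt) : Prop :=
  Omrh n N Or k /\
  forall i j, (i < n)%nat -> (j < n)%nat ->
    Omrh n N Or (shift k i 1) /\ Omrh n N Or (shift k j (-1)) /\
    Omrh n N Or (shift (shift k i 1) j (-1)).
Definition dOmrh (n N : nat) (Or : pt -> Prop) (k : gpt) : Prop :=
  Omrh n N Or k /\ ~ Omr0 n N Or k.
Definition Oms (n N : nat) (Or : pt -> Prop) (k : gpt) : Prop :=
  Omh0 n N k /\ ~ Omr0 n N Or k.

Definition dplus (N : nat) (v : mesh) (i : nat) (k : gpt) : R :=
  (v (shift k i 1) - v k) / hN N.
Definition dminus (N : nat) (v : mesh) (i : nat) (k : gpt) : R :=
  (v k - v (shift k i (-1))) / hN N.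

Definition Hd (N : nat) (v : mesh) (k : gpt) (i j : nat) : R :=
  dminus N (fun p => dplus N v i p) j k.
Definition symHd (N : nat) (v : mesh) (k : gpt) (i j : nat) : R :=
  (Hd N v k i j + Hd N v k j i) / 2.

Definition Mr (n N : nat) (v : mesh) (k : gpt) : R :=
  / INR n * rsum n (fun i =>
     dminus N (fun p => rsum n (fun j => cof n (symHd N v p) j i * dplus N v j p)) i k).

(* W_h(x): orthogonal bases (alpha_1..alpha_n) with x +- alpha_i in Omega^h.
   Since x is a grid point, alpha_i = h a_i with a_i an integer vector. *)
Definition Wh (n N : nat) (k : gpt) (al : list gpt) : Prop :=
  length al = n /\
  (forall i, (i < n)%nat -> length (nth i al []) = n /\ dotZ (nth i al []) (nth i al []) <> 0%Z) /\
  (forall i j, (i < n)%nat -> (j < n)%nat -> i <> j -> dotZ (nth i al []) (nth j al []) = 0%Z) /\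
  (forall i, (i < n)%nat -> Omh n N (vadd k (nth i al [])) /\ Omh n N (vsub k (nth i al []))).

Definition sd2 (N : nat) (v : mesh) (k a : gpt) : R :=
  (v (vadd k a) - 2 * v k + v (vsub k a)) / (hN N ^ 2 * IZR (dotZ a a)).

Definition is_inf (S : R -> Prop) (m : R) : Prop :=
  (forall s, S s -> m <= s) /\ (forall m', (forall s, S s -> m' <= s) -> m' <= m).

Definition infimum (S : R -> Prop) : R := epsilon (inhabits 0) (fun m => is_inf S m).

Definition Ms_plus (n N : nat) (v : mesh) (k : gpt) : R :=
  infimum (fun p => exists al, Wh n N k al /\
         p = fold_right Rmult 1 (map (fun a => Rmax (sd2 N v k a) 0) al)).

Definition Fh (n N : nat) (Or : pt -> Prop) (f : pt -> R) (v : mesh) (k : gpt) : R :=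
  if excluded_middle_informative (Oms n N Or k)
  then Ms_plus n N v k - f (xpt N k)
  else Mr n N v k - f (xpt N k).

Definition ind (P : Prop) : R := if excluded_middle_informative P then 1 else 0.

Definition semi1h (n N : nat) (Or : pt -> Prop) (v : mesh) : R :=
  sqrt (hN N ^ n * rsum n (fun i =>
     fold_right Rplus 0 (map (fun k => ind (Omr0 n N Or k) * (dplus N v i k) ^ 2) (grid n N)))).

Definition rh (N : nat) (w : pt -> R) : mesh := fun k => w (xpt N k).

Definition in_Brho (n N : nat) (Or : pt -> Prop) (g u : pt -> R) (rho : R) (v : mesh) : Prop :=
  semi1h n N Or (fun k => v k - rh N u k) <= rho /\
  (forall k, dOmh n N k -> v k = rh N g k) /\
  (forall k, dOmrh n N Or k -> v k = rh N u k).

(* Near the regular region the H^1 bound does the work: a single forward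
   difference of [uh - r_h u] at a point of Omega_{r,0}^h is at most
   [C_* h^3], and summing at most [N = 1/h] of them along the first coordinate
   axis, up to dOmega_r^h where the error vanishes, keeps [uh] within [C_*] of
   [u].  On Omega_s^h the equation [M_s^+[uh] = f] yields a discrete maximum
   principle: [M_s^+ > 0] makes [uh] strictly convex along a grid direction,
   so [uh] has no maximum there, and [f < 2A <= (2A)^n] makes [A|x|^2 - uh]
   strictly convex along some admissible direction, so [uh - A|x|^2] has no
   minimum there.  Both extrema thus sit on dOmega^h, where [uh = g = u], or
   on Omega_{r,0}^h, where [uh] is already controlled. *)

From Pilot Require Import Defs.
From Stdlib Require Import Reals Lra Lia List Classical ClassicalEpsilon.
Import ListNotations.
Open Scope R_scope.

Definition strictly_increasing (phi : nat -> nat) : Prop :=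
  forall k, (phi k < phi (S k))%nat.

Lemma strictly_increasing_lt phi :
  strictly_increasing phi -> forall a b, (a < b)%nat -> (phi a < phi b)%nat.
Proof.
  intros Hphi a b Hab. induction Hab as [|b _ IH]; [apply Hphi|].
  specialize (Hphi b). lia.
Qed.

Lemma strictly_increasing_ge phi : strictly_increasing phi -> forall k, (k <= phi k)%nat.
Proof. intros Hphi k. induction k as [|k IH]; [lia|]. specialize (Hphi k). lia. Qed.

Lemma strictly_increasing_comp phi psi :
  strictly_increasing phi -> strictly_increasing psi ->
  strictly_increasing (fun k => phi (psi k)).
Proof. intros Hphi Hpsi k. exact (strictly_increasing_lt phi Hphi _ _ (Hpsi k)). Qed.

Lemma ValAdh_subseq (un : nat -> R) (l : R) :
  ValAdh un l -> exists phi, strictly_increasing phi /\ Un_cv (fun k => un (phi k)) l.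
Proof.
  intro Hl.
  assert (Hnear : forall M j : nat, exists p, (M <= p)%nat /\ Rabs (un p - l) < / INR (S j)).
  { intros M j.
    assert (Hr : 0 < / INR (S j)) by (apply Rinv_0_lt_compat, lt_0_INR; lia).
    apply (Hl (disc l (mkposreal _ Hr)) M). exists (mkposreal _ Hr). intros y Hy. exact Hy. }
  set (sel M j := epsilon (inhabits O)
                    (fun p => (M <= p)%nat /\ Rabs (un p - l) < / INR (S j))).
  assert (Hsel : forall M j, (M <= sel M j)%nat /\ Rabs (un (sel M j) - l) < / INR (S j))
    by (intros M j; exact (epsilon_spec _ _ (Hnear M j))).
  set (phi := fix phi k := match k with O => sel O O | S k' => sel (S (phi k')) k end).
  assert (Hphi : forall k, Rabs (un (phi k) - l) < / INR (S k)) by (intros [|k]; apply Hsel).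
  exists phi. split.
  - intro k. exact (proj1 (Hsel (S (phi k)) (S k))).
  - intros eps Heps. destruct (archimed_cor1 eps Heps) as [K [HK HK0]].
    exists K. intros k Hk. unfold R_dist. eapply Rlt_le_trans; [apply Hphi|].
    left. eapply Rle_lt_trans; [|exact HK].
    apply Rinv_le_contravar; [apply lt_0_INR; lia | apply le_INR; lia].
Qed.

Lemma unit_interval_seq_compact (t : nat -> R) :
  (forall k, 0 <= t k <= 1) ->
  exists phi l, strictly_increasing phi /\ 0 <= l <= 1 /\ Un_cv (fun k => t (phi k)) l.
Proof.
  intro Ht.
  destruct (Bolzano_Weierstrass t _ (compact_P3 0 1) Ht) as [l Hl].
  destruct (ValAdh_subseq t l Hl) as [phi [Hphi Hcv]].
  exists phi, l. repeat split; auto; apply Rnot_lt_le; intro Hout;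
    [destruct (Hcv (- l)) as [K HK] | destruct (Hcv (l - 1)) as [K HK]]; try lra;
    specialize (HK K (le_n K)); unfold R_dist in HK; apply Rabs_def2 in HK;
    specialize (Ht (phi K)); lra.
Qed.

Lemma sum_list_nonneg {A : Type} (G : A -> R) (l : list A) :
  (forall y, 0 <= G y) -> 0 <= fold_right Rplus 0 (map G l).
Proof. intro HG. induction l as [|a l IH]; simpl; [lra|]. specialize (HG a). lra. Qed.

Lemma sum_list_ge_term {A : Type} (G : A -> R) (l : list A) (x : A) :
  (forall y, 0 <= G y) -> In x l -> G x <= fold_right Rplus 0 (map G l).
Proof.
  intros HG Hx. induction l as [|a l IH]; [destruct Hx|]. simpl.
  destruct Hx as [<-|Hx].
  - pose proof (sum_list_nonneg G l HG). lra.
  - pose proof (IH Hx). specialize (HG a). lra.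
Qed.

Lemma edist_cons_le a x b y : edist (a :: x) (b :: y) <= Rabs (a - b) + edist x y.
Proof.
  unfold edist. cbn [combine map fold_right fst snd].
  set (S := fold_right Rplus 0 _).
  assert (HS : 0 <= S) by (apply sum_list_nonneg; intro; apply pow2_ge_0).
  pose proof (sqrt_pos S). pose proof (Rabs_pos (a - b)).
  rewrite <- (sqrt_pow2 (Rabs (a - b) + sqrt S)) by lra.
  apply sqrt_le_1_alt.
  replace ((Rabs (a - b) + sqrt S) ^ 2)
    with (Rabs (a - b) ^ 2 + 2 * Rabs (a - b) * sqrt S + sqrt S * sqrt S) by ring.
  rewrite pow2_abs, (sqrt_sqrt S HS). nra.
Qed.

Definition pt_cv (s : nat -> pt) (l : pt) : Prop :=
  forall eps, 0 < eps -> exists K, forall k, (K <= k)%nat -> edist l (s k) < eps.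

Lemma cube_closed_seq_compact n (s : nat -> pt) :
  (forall k, cube_closed n (s k)) ->
  exists phi l, strictly_increasing phi /\ cube_closed n l /\ pt_cv (fun k => s (phi k)) l.
Proof.
  revert s. induction n as [|n IH]; intros s Hs.
  - exists (fun k => k), []. split; [intro; lia|split; [split; auto|]].
    intros eps Heps. exists O. intros k _. destruct (Hs k) as [Hlen _].
    destruct (s k); [|discriminate]. unfold edist. simpl. rewrite sqrt_0. exact Heps.
  - assert (Hcons : forall k, s k = hd 0 (s k) :: tl (s k)).
    { intro k. destruct (Hs k) as [Hlen _]. destruct (s k); [discriminate|reflexivity]. }
    assert (Hhd : forall k, 0 <= hd 0 (s k) <= 1 /\ cube_closed n (tl (s k))).
    { intro k. destruct (Hs k) as [Hlen HF]. rewrite Hcons in Hlen, HF.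
      inversion HF as [|? ? Hhd0 Htl]; subst.
      split; [exact Hhd0|split; [simpl in Hlen; lia|exact Htl]]. }
    destruct (IH (fun k => tl (s k)) (fun k => proj2 (Hhd k))) as [phi1 [y [Hphi1 [Hy Hcv1]]]].
    destruct (unit_interval_seq_compact (fun k => hd 0 (s (phi1 k))) (fun k => proj1 (Hhd _)))
      as [phi2 [t0 [Hphi2 [Ht0 Hcv2]]]].
    exists (fun k => phi1 (phi2 k)), (t0 :: y). split; [|split].
    + apply strictly_increasing_comp; assumption.
    + destruct Hy as [Hlen HF]. split; simpl; auto.
    + intros eps Heps.
      destruct (Hcv1 (eps / 2)) as [K1 HK1]; [lra|].
      destruct (Hcv2 (eps / 2)) as [K2 HK2]; [lra|].
      exists (Nat.max K1 K2). intros k Hk.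
      rewrite (Hcons (phi1 (phi2 k))).
      eapply Rle_lt_trans; [apply edist_cons_le|].
      specialize (HK2 k ltac:(lia)). unfold R_dist in HK2. rewrite Rabs_minus_sym in HK2.
      pose proof (strictly_increasing_ge phi2 Hphi2 k).
      specialize (HK1 (phi2 k) ltac:(lia)). simpl in HK1. lra.
Qed.

Lemma cont_on_cube_bounded n (F : pt -> R) :
  cont_on (cube_closed n) F ->
  exists B, 0 <= B /\ forall x, cube_closed n x -> Rabs (F x) <= B.
Proof.
  intro HF. apply NNPP. intro Hunb.
  assert (Hbig : forall k : nat, exists x, cube_closed n x /\ INR k < Rabs (F x)).
  { intro k. apply NNPP. intro Hk. apply Hunb. exists (INR k). split; [apply pos_INR|].
    intros x Hx. apply Rnot_lt_le. intro Hlt. apply Hk. eauto. }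
  set (s k := epsilon (inhabits []) (fun x => cube_closed n x /\ INR k < Rabs (F x))).
  assert (Hs : forall k, cube_closed n (s k) /\ INR k < Rabs (F (s k)))
    by (intro k; exact (epsilon_spec _ _ (Hbig k))).
  destruct (cube_closed_seq_compact n s (fun k => proj1 (Hs k))) as [phi [l [Hphi [Hl Hcv]]]].
  destruct (HF l Hl 1 Rlt_0_1) as [delta [Hdelta Hnear]].
  destruct (Hcv delta Hdelta) as [K HK].
  destruct (INR_unbounded (Rabs (F l) + 1)) as [K' HK'].
  set (k := Nat.max K K').
  specialize (Hnear _ (proj1 (Hs (phi k))) (HK k (Nat.le_max_l _ _))).
  pose proof (proj2 (Hs (phi k))).
  assert (INR K' <= INR (phi k))
    by (apply le_INR; pose proof (strictly_increasing_ge phi Hphi k); unfold k in *; lia).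
  pose proof (Rabs_triang_inv (F (s (phi k))) (F l)). lra.
Qed.

Lemma In_grid n N k : In k (grid n N) <-> Omh n N k.
Proof.
  revert k. induction n as [|n IH]; intro k; split.
  - intros [<-|[]]. split; auto.
  - intros [Hlen _]. destruct k; [left; reflexivity|discriminate].
  - cbn [grid]. rewrite in_flat_map. intros [z [Hz Hk]].
    apply in_map_iff in Hz as [p [<- Hp]]. apply in_seq in Hp.
    apply in_map_iff in Hk as [k' [<- Hk']]. apply IH in Hk' as [Hlen HF].
    split; [simpl; auto|constructor; auto; lia].
  - intros [Hlen HF]. destruct k as [|z k]; [discriminate|].
    inversion HF as [|? ? Hz Hk]; subst. cbn [grid]. apply in_flat_map. exists z. split.
    + apply in_map_iff. exists (Z.to_nat z). split; [lia|]. apply in_seq. lia.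
    + apply in_map, IH. split; auto.
Qed.

Lemma grid_nonempty n N : grid n N <> [].
Proof.
  intro Hnil. assert (Hzero : Omh n N (repeat 0%Z n)).
  { split; [apply repeat_length|]. apply Forall_forall. intros z Hz.
    apply repeat_spec in Hz. lia. }
  apply In_grid in Hzero. rewrite Hnil in Hzero. destruct Hzero.
Qed.

Lemma list_argmax {A : Type} (F : A -> R) (l : list A) :
  l <> [] -> exists m, In m l /\ forall y, In y l -> F y <= F m.
Proof.
  induction l as [|a l IH]; intro Hne; [congruence|].
  destruct l as [|b l].
  - exists a. split; [left; reflexivity|]. intros y [<-|[]]. lra.
  - destruct (IH ltac:(discriminate)) as [m [Hm Hmax]].
    destruct (Rle_dec (F a) (F m)).
    + exists m. split; [right; exact Hm|]. intros y [<-|Hy]; auto.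
    + exists a. split; [left; reflexivity|]. intros y [<-|Hy]; [lra|].
      specialize (Hmax y Hy). lra.
Qed.

Lemma grid_max_principle n N (w : mesh) (S : gpt -> Prop) (B : R) :
  (forall k, Omh n N k -> ~ S k -> w k <= B) ->
  (forall k, Omh n N k -> S k -> exists a,
       Omh n N (vadd k a) /\ Omh n N (vsub k a) /\ 2 * w k < w (vadd k a) + w (vsub k a)) ->
  forall k, Omh n N k -> w k <= B.
Proof.
  intros Hoff Hconv k Hk.
  destruct (list_argmax w (grid n N) (grid_nonempty n N)) as [m [Hm Hmax]].
  apply In_grid in Hm.
  assert (Hwm : w m <= B).
  { destruct (classic (S m)) as [HS|HS]; [|exact (Hoff m Hm HS)].
    destruct (Hconv m Hm HS) as [a [Hp [Hq Hlt]]].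
    apply In_grid, Hmax in Hp. apply In_grid, Hmax in Hq. lra. }
  apply In_grid, Hmax in Hk. lra.
Qed.

Lemma hN_pos N : (1 <= N)%nat -> 0 < hN N.
Proof. intro HN. apply Rinv_0_lt_compat, lt_0_INR. lia. Qed.

Lemma INR_mul_hN N : (1 <= N)%nat -> INR N * hN N = 1.
Proof. intro HN. apply Rinv_r, not_0_INR. lia. Qed.

Lemma xpt_coord_closed N z :
  (1 <= N)%nat -> (0 <= z <= Z.of_nat N)%Z -> 0 <= IZR z * hN N <= 1.
Proof.
  intros HN Hz. pose proof (hN_pos N HN). rewrite <- (INR_mul_hN N HN).
  assert (0 <= IZR z <= INR N) by (rewrite INR_IZR_INZ; split; apply IZR_le; lia).
  split; [apply Rmult_le_pos|apply Rmult_le_compat_r]; lra.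
Qed.

Lemma xpt_coord_open N z :
  (1 <= N)%nat -> 0 < IZR z * hN N < 1 -> (0 < z < Z.of_nat N)%Z.
Proof.
  intros HN Hz. pose proof (hN_pos N HN). rewrite <- (INR_mul_hN N HN) in Hz.
  rewrite INR_IZR_INZ in Hz.
  split; apply lt_IZR; apply (Rmult_lt_reg_r (hN N)); lra.
Qed.

Lemma Omh_cube_closed n N k : (1 <= N)%nat -> Omh n N k -> cube_closed n (xpt N k).
Proof.
  intros HN [Hlen HF]. split; [unfold xpt; rewrite length_map; exact Hlen|].
  apply Forall_map. eapply Forall_impl; [|exact HF]. intro z. apply xpt_coord_closed, HN.
Qed.

Lemma dOmh_cube_bdry n N k : (1 <= N)%nat -> dOmh n N k -> cube_bdry n (xpt N k).
Proof.
  intros HN [HO Hnot]. split; [exact (Omh_cube_closed n N k HN HO)|].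
  intros [Hlen HF]. apply Hnot. unfold xpt in Hlen, HF. rewrite length_map in Hlen.
  split; [exact Hlen|]. apply Forall_map in HF. eapply Forall_impl; [|exact HF].
  intro z. apply xpt_coord_open, HN.
Qed.

Lemma Omh0_Omh n N k : Omh0 n N k -> Omh n N k.
Proof. intros [Hlen HF]. split; [exact Hlen|]. eapply Forall_impl; [|exact HF]. cbv beta; lia. Qed.

Definition sqn (x : pt) : R := fold_right Rplus 0 (map (fun t => t ^ 2) x).

Lemma sqn_cube_closed n x : cube_closed n x -> 0 <= sqn x <= INR n.
Proof.
  intros [<- HF]. induction x as [|a x IH]; [unfold sqn; simpl; lra|].
  inversion HF as [|? ? Ha Hx]; subst. specialize (IH Hx).
  unfold sqn in *. cbn [map fold_right length]. rewrite S_INR. nra.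
Qed.

Lemma sqn_second_difference N k a : length a = length k ->
  sqn (xpt N (vadd k a)) - 2 * sqn (xpt N k) + sqn (xpt N (vsub k a))
  = 2 * hN N ^ 2 * IZR (dotZ a a).
Proof.
  revert a. induction k as [|z k IH]; intros [|b a] Hlen; try discriminate.
  - unfold sqn, xpt, vadd, vsub, dotZ. simpl. ring.
  - injection Hlen as Hlen. specialize (IH a Hlen).
    unfold sqn, xpt, vadd, vsub, dotZ in *. cbn [map fold_right combine fst snd] in *.
    rewrite plus_IZR, minus_IZR, plus_IZR, mult_IZR. nra.
Qed.

Lemma dotZ_self_nonneg a : (0 <= dotZ a a)%Z.
Proof. induction a as [|b a IH]; unfold dotZ in *; simpl; nia. Qed.

Lemma sd2_pos_iff N v k a : 0 < hN N -> (0 < dotZ a a)%Z ->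
  0 < sd2 N v k a <-> 2 * v k < v (vadd k a) + v (vsub k a).
Proof.
  intros Hh Ha. apply IZR_lt in Ha. unfold sd2.
  assert (Hden : 0 < hN N ^ 2 * IZR (dotZ a a)) by (apply Rmult_lt_0_compat; nra).
  split; intro Hpos.
  - apply (Rmult_lt_compat_r _ _ _ Hden) in Hpos.
    unfold Rdiv in Hpos. rewrite Rmult_0_l, Rmult_assoc, Rinv_l in Hpos; lra.
  - apply Rdiv_lt_0_compat; lra.
Qed.

Lemma sd2_quadratic_sub N (v : mesh) (A : R) k a :
  length a = length k -> hN N <> 0 -> dotZ a a <> 0%Z ->
  sd2 N (fun p => A * sqn (xpt N p) - v p) k a = 2 * A - sd2 N v k a.
Proof.
  intros Hlen Hh Ha. apply not_0_IZR in Ha.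
  pose proof (sqn_second_difference N k a Hlen) as Hsq.
  unfold sd2.
  replace (A * sqn (xpt N (vadd k a)) - v (vadd k a) - 2 * (A * sqn (xpt N k) - v k)
           + (A * sqn (xpt N (vsub k a)) - v (vsub k a)))
    with (A * (2 * hN N ^ 2 * IZR (dotZ a a)) - (v (vadd k a) - 2 * v k + v (vsub k a)))
    by (rewrite <- Hsq; ring).
  field. split; assumption.
Qed.

Lemma prod_list_nonneg {A : Type} (F : A -> R) (l : list A) :
  (forall a, 0 <= F a) -> 0 <= fold_right Rmult 1 (map F l).
Proof. intro HF. induction l as [|a l IH]; simpl; [lra|]. apply Rmult_le_pos; auto. Qed.

Lemma prod_list_zero {A : Type} (F : A -> R) (l : list A) (a : A) :
  In a l -> F a = 0 -> fold_right Rmult 1 (map F l) = 0.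
Proof.
  intros Ha HFa. induction l as [|b l IH]; [destruct Ha|]. simpl.
  destruct Ha as [<-|Ha]; [rewrite HFa | rewrite (IH Ha)]; ring.
Qed.

Lemma prod_list_ge_pow {A : Type} (F : A -> R) (c : R) (l : list A) :
  0 <= c -> (forall a, In a l -> c <= F a) -> c ^ length l <= fold_right Rmult 1 (map F l).
Proof.
  intros Hc HF. induction l as [|a l IH]; simpl; [lra|].
  apply Rmult_le_compat; [exact Hc | apply pow_le, Hc | apply HF; left; reflexivity |].
  apply IH. intros b Hb. apply HF. right. exact Hb.
Qed.

Fixpoint unit_gpt (n i : nat) : gpt :=
  match n, i with
  | O, _ => []
  | S m, O => 1%Z :: repeat 0%Z m
  | S m, S j => 0%Z :: unit_gpt m j
  end.

Definition std_basis (n : nat) : list gpt := map (unit_gpt n) (seq 0 n).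

Lemma unit_gpt_length n i : length (unit_gpt n i) = n.
Proof.
  revert i. induction n as [|n IH]; intros [|i]; simpl; auto.
  rewrite repeat_length. reflexivity.
Qed.

Lemma dotZ_cons a x b y : dotZ (a :: x) (b :: y) = (a * b + dotZ x y)%Z.
Proof. reflexivity. Qed.

Lemma dotZ_repeat0_l m x : dotZ (repeat 0%Z m) x = 0%Z.
Proof.
  revert x. induction m as [|m IH]; intros [|z x]; try reflexivity.
  cbn [repeat]. rewrite dotZ_cons, IH. lia.
Qed.

Lemma dotZ_repeat0_r m x : dotZ x (repeat 0%Z m) = 0%Z.
Proof.
  revert x. induction m as [|m IH]; intros [|z x]; try reflexivity.
  cbn [repeat]. rewrite dotZ_cons, IH. lia.
Qed.

Lemma dotZ_unit_gpt n i j : (i < n)%nat -> (j < n)%nat ->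
  dotZ (unit_gpt n i) (unit_gpt n j) = if Nat.eqb i j then 1%Z else 0%Z.
Proof.
  revert i j. induction n as [|n IH]; intros [|i] [|j] Hi Hj; try lia;
    cbn [unit_gpt Nat.eqb]; rewrite dotZ_cons.
  - rewrite dotZ_repeat0_l. reflexivity.
  - rewrite dotZ_repeat0_l. reflexivity.
  - rewrite dotZ_repeat0_r. reflexivity.
  - rewrite IH by lia. destruct (Nat.eqb i j); reflexivity.
Qed.

Lemma vadd_repeat0 k : vadd k (repeat 0%Z (length k)) = k.
Proof. induction k as [|z k IH]; [reflexivity|]. cbn. rewrite Z.add_0_r. f_equal. exact IH. Qed.

Lemma vsub_repeat0 k : vsub k (repeat 0%Z (length k)) = k.
Proof. induction k as [|z k IH]; [reflexivity|]. cbn. rewrite Z.sub_0_r. f_equal. exact IH. Qed.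

Lemma vadd_cons z k b a : vadd (z :: k) (b :: a) = (z + b)%Z :: vadd k a.
Proof. reflexivity. Qed.

Lemma vsub_cons z k b a : vsub (z :: k) (b :: a) = (z - b)%Z :: vsub k a.
Proof. reflexivity. Qed.

Lemma Omh0_unit_gpt_neighbours n N k i : Omh0 n N k -> (i < n)%nat ->
  Omh n N (vadd k (unit_gpt n i)) /\ Omh n N (vsub k (unit_gpt n i)).
Proof.
  intros [Hlen HF]. subst n. revert i.
  induction k as [|z k IH]; intros [|i] Hi; cbn [length] in Hi; try lia;
    inversion HF as [|? ? Hz Hk]; subst; cbn [unit_gpt length]; rewrite vadd_cons, vsub_cons.
  - rewrite vadd_repeat0, vsub_repeat0.
    pose proof (Omh0_Omh _ N k (conj eq_refl Hk)) as [_ HFk].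
    split; split; cbn [length]; auto; constructor; auto; lia.
  - destruct (IH Hk i ltac:(lia)) as [[Hl1 HF1] [Hl2 HF2]].
    split; split; cbn [length]; try lia; constructor; auto; lia.
Qed.

Lemma nth_std_basis n i : (i < n)%nat -> nth i (std_basis n) [] = unit_gpt n i.
Proof.
  intro Hi. unfold std_basis.
  rewrite nth_indep with (d' := unit_gpt n 0) by (rewrite length_map, length_seq; exact Hi).
  rewrite map_nth, seq_nth by exact Hi. reflexivity.
Qed.

Lemma std_basis_Wh n N k : Omh0 n N k -> Wh n N k (std_basis n).
Proof.
  intro Hk. split; [unfold std_basis; rewrite length_map, length_seq; reflexivity|].
  split; [|split]; intros i; [|intros j Hi Hj Hij|]; intros; rewrite ?nth_std_basis by assumption.
  - rewrite unit_gpt_length, dotZ_unit_gpt, Nat.eqb_refl by assumption. split; [reflexivity|lia].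
  - rewrite dotZ_unit_gpt by assumption. apply Nat.eqb_neq in Hij. rewrite Hij. reflexivity.
  - apply Omh0_unit_gpt_neighbours; assumption.
Qed.

Lemma Wh_In n N k al a : Wh n N k al -> In a al ->
  length a = n /\ (0 < dotZ a a)%Z /\ Omh n N (vadd k a) /\ Omh n N (vsub k a).
Proof.
  intros [Hlen [Hnz [_ Hnb]]] Ha. apply In_nth with (d := []) in Ha as [i [Hi <-]].
  rewrite Hlen in Hi. destruct (Hnz i Hi) as [Hl Hd]. destruct (Hnb i Hi).
  pose proof (dotZ_self_nonneg (nth i al [])).
  split; [exact Hl|split; [lia|split; assumption]].
Qed.

Lemma infimum_is_inf (S : R -> Prop) (m : R) :
  (exists s, S s) -> (forall s, S s -> m <= s) -> is_inf S (infimum S).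
Proof.
  intros Hne Hlb. unfold infimum. apply epsilon_spec.
  set (E y := S (- y)).
  assert (HE : exists y, E y)
    by (destruct Hne as [s Hs]; exists (- s); unfold E; rewrite Ropp_involutive; exact Hs).
  assert (Hbound : bound E) by (exists (- m); intros y Hy; specialize (Hlb _ Hy); lra).
  destruct (completeness E Hbound HE) as [M [HMub HMleast]].
  exists (- M). split.
  - intros s Hs. assert (HEs : E (- s)) by (unfold E; rewrite Ropp_involutive; exact Hs).
    specialize (HMub _ HEs). lra.
  - intros m' Hm'.
    assert (Hub : is_upper_bound E (- m')) by (intros y Hy; specialize (Hm' _ Hy); lra).
    specialize (HMleast _ Hub). lra.
Qed.

Definition Wh_products (n N : nat) (v : mesh) (k : gpt) (p : R) : Prop :=
  exists al, Wh n N k al /\ p = fold_right Rmult 1 (map (fun a => Rmax (sd2 N v k a) 0) al).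

Lemma Ms_plus_is_inf n N v k : Omh0 n N k -> is_inf (Wh_products n N v k) (Ms_plus n N v k).
Proof.
  intro Hk. apply infimum_is_inf with 0.
  - eexists. exists (std_basis n). split; [exact (std_basis_Wh n N k Hk)|reflexivity].
  - intros s [al [_ ->]]. apply prod_list_nonneg. intro a. apply Rmax_r.
Qed.

Lemma Ms_plus_pos_sd2_pos n N v k al a : Omh0 n N k -> 0 < Ms_plus n N v k ->
  Wh n N k al -> In a al -> 0 < sd2 N v k a.
Proof.
  intros Hk Hpos Hal Ha. apply Rnot_le_lt. intro Hle.
  destruct (Ms_plus_is_inf n N v k Hk) as [Hlb _].
  specialize (Hlb _ (ex_intro _ al (conj Hal eq_refl))).
  rewrite (prod_list_zero _ al a Ha) in Hlb by (apply Rmax_right; exact Hle). lra.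
Qed.

Lemma Ms_plus_lt_pow n N v k c : Omh0 n N k -> 0 <= c -> Ms_plus n N v k < c ^ n ->
  exists al a, Wh n N k al /\ In a al /\ sd2 N v k a < c.
Proof.
  intros Hk Hc Hlt. apply NNPP. intro Hnone.
  destruct (Ms_plus_is_inf n N v k Hk) as [_ Hglb].
  assert (c ^ n <= Ms_plus n N v k); [|lra].
  apply Hglb. intros s [al [Hal ->]]. destruct Hal as [Hlen Hal'].
  rewrite <- Hlen. apply prod_list_ge_pow; [exact Hc|]. intros a Ha.
  eapply Rle_trans; [|apply Rmax_l]. apply Rnot_lt_le. intro Hsd.
  apply Hnone. exists al, a. split; [split; assumption|]. split; assumption.
Qed.

Lemma rsum_nonneg m F : (forall j, 0 <= F j) -> 0 <= rsum m F.
Proof. intro HF. induction m as [|m IH]; simpl; [lra|]. specialize (HF m). lra. Qed.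

Lemma rsum_ge_term m F i : (forall j, 0 <= F j) -> (i < m)%nat -> F i <= rsum m F.
Proof.
  intros HF Hi. induction m as [|m IH]; [lia|]. simpl.
  destruct (Nat.eq_dec i m) as [->|Hne].
  - pose proof (rsum_nonneg m F HF). lra.
  - pose proof (IH ltac:(lia)). specialize (HF m). lra.
Qed.

Lemma ind_nonneg P : 0 <= Defs.ind P.
Proof. unfold Defs.ind. destruct (excluded_middle_informative P); lra. Qed.

Lemma ind_true (P : Prop) : P -> Defs.ind P = 1.
Proof. intro HP. unfold Defs.ind. destruct (excluded_middle_informative P); tauto. Qed.

Lemma dplus_sq_le_semi1h n N Or v k i : 0 <= hN N -> Omr0 n N Or k -> (i < n)%nat ->
  hN N ^ n * dplus N v i k ^ 2 <= semi1h n N Or v ^ 2.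
Proof.
  intros Hh Hk Hi.
  assert (Hterm : forall i' k', 0 <= Defs.ind (Omr0 n N Or k') * dplus N v i' k' ^ 2)
    by (intros; apply Rmult_le_pos; [apply ind_nonneg|apply pow2_ge_0]).
  unfold semi1h. rewrite pow2_sqrt
    by (apply Rmult_le_pos;
        [apply pow_le, Hh|apply rsum_nonneg; intro; apply sum_list_nonneg, Hterm]).
  apply Rmult_le_compat_l; [apply pow_le, Hh|].
  eapply Rle_trans; [|apply (rsum_ge_term n _ i); [intro; apply sum_list_nonneg, Hterm|exact Hi]].
  eapply Rle_trans; [|apply (sum_list_ge_term _ _ k); [apply Hterm|apply In_grid, Hk]].
  cbv beta. rewrite ind_true by exact Hk. lra.
Qed.

Lemma Rpower_sq h n : 0 < h -> Rpower h (2 + INR n / 2) ^ 2 = h ^ 4 * h ^ n.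
Proof.
  intro Hh. rewrite <- Rpower_pow, Rpower_mult by (apply exp_pos).
  replace ((2 + INR n / 2) * INR 2) with (INR 4 + INR n) by (simpl; lra).
  rewrite Rpower_plus, !Rpower_pow by exact Hh. reflexivity.
Qed.

Lemma step_bound_of_semi1h n N Or v C k i : (1 <= N)%nat -> 0 <= C ->
  semi1h n N Or v <= C * Rpower (hN N) (2 + INR n / 2) -> Omr0 n N Or k -> (i < n)%nat ->
  Rabs (v (shift k i 1%Z) - v k) <= C * hN N ^ 3.
Proof.
  intros HN HC Hsemi Hk Hi. pose proof (hN_pos N HN) as Hh.
  assert (Hhn : 0 < hN N ^ n) by (apply pow_lt, Hh).
  assert (Hsq : hN N ^ n * dplus N v i k ^ 2 <= hN N ^ n * (C * hN N ^ 2) ^ 2).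
  { eapply Rle_trans; [apply dplus_sq_le_semi1h; [lra|exact Hk|exact Hi]|].
    eapply Rle_trans; [apply pow_incr; split; [apply sqrt_pos|exact Hsemi]|].
    rewrite Rpow_mult_distr, Rpower_sq by exact Hh. right. ring. }
  apply Rmult_le_reg_l in Hsq; [|exact Hhn].
  assert (Hd : Rabs (dplus N v i k) <= C * hN N ^ 2).
  { rewrite <- (Rabs_pos_eq (C * hN N ^ 2)) by (apply Rmult_le_pos; [exact HC|apply pow_le; lra]).
    apply Rsqr_le_abs_0. unfold Rsqr. simpl in Hsq. lra. }
  replace (v (shift k i 1%Z) - v k) with (dplus N v i k * hN N) by (unfold dplus; field; lra).
  rewrite Rabs_mult, (Rabs_pos_eq (hN N)) by lra.
  replace (C * hN N ^ 3) with (C * hN N ^ 2 * hN N) by ring.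
  apply Rmult_le_compat_r; lra.
Qed.

(* Walk from [k] along [e_0]: after at most [N] steps one reaches a point of
   dOmega_r^h, since a point of Omega_{r,0}^h has its [e_0]-neighbour in the grid. *)
Lemma Omrh_walk_bound n N Or (v : mesh) (delta : R) :
  (0 < n)%nat -> 0 <= delta ->
  (forall k, dOmrh n N Or k -> v k = 0) ->
  (forall k, Omr0 n N Or k -> Rabs (v (shift k 0 1%Z) - v k) <= delta) ->
  forall k, Omrh n N Or k -> Rabs (v k) <= INR N * delta.
Proof.
  intros Hn Hdelta Hzero Hstep.
  assert (Hwalk : forall m k, Omrh n N Or k -> (Z.of_nat N - nth 0 k 0 <= Z.of_nat m)%Z ->
                    Rabs (v k) <= INR m * delta).
  { induction m as [|m IH]; intros k Hk Hm;
      (destruct (classic (Omr0 n N Or k)) as [Hr|Hr];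
       [|rewrite Hzero by (split; assumption); rewrite Rabs_R0;
         apply Rmult_le_pos; [apply pos_INR|exact Hdelta]]).
    - exfalso. destruct (proj2 Hr 0%nat 0%nat Hn Hn) as [[[_ HF] _] _].
      destruct k as [|z k]; [destruct Hk as [[Hlen _] _]; simpl in Hlen; lia|].
      inversion HF. simpl in Hm. lia.
    - destruct (proj2 Hr 0%nat 0%nat Hn Hn) as [Hnext _].
      assert (Hm' : (Z.of_nat N - nth 0 (shift k 0 1) 0 <= Z.of_nat m)%Z).
      { destruct k as [|z k]; [destruct Hk as [[Hlen _] _]; simpl in Hlen; lia|].
        simpl in *. lia. }
      specialize (IH _ Hnext Hm'). specialize (Hstep k Hr). rewrite S_INR.
      pose proof (Rabs_triang_inv (v k) (v (shift k 0 1))).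
      rewrite Rabs_minus_sym in Hstep. lra. }
  intros k Hk. apply Hwalk; [exact Hk|].
  destruct Hk as [[Hlen HF] _]. destruct k as [|z k]; [simpl in Hlen; lia|].
  inversion HF. simpl. lia.
Qed.

Lemma regular_error_bound n N Or g u uh Cstar :
  (0 < n)%nat -> (1 <= N)%nat -> 0 <= Cstar ->
  in_Brho n N Or g u (Cstar * Rpower (hN N) (2 + INR n / 2)) uh ->
  forall k, Omrh n N Or k -> Rabs (uh k - rh N u k) <= Cstar.
Proof.
  intros Hn HN HC [Hsemi [_ Hregbd]] k Hk. pose proof (hN_pos N HN) as Hh.
  eapply Rle_trans.
  - apply (Omrh_walk_bound n N Or (fun p => uh p - rh N u p) (Cstar * hN N ^ 3) Hn);
      [apply Rmult_le_pos; [exact HC|apply pow_le; lra]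
      | intros p Hp; rewrite Hregbd by exact Hp; ring
      | intros p Hp; exact (step_bound_of_semi1h n N Or _ Cstar p 0 HN HC Hsemi Hp Hn)
      | exact Hk].
  - replace (INR N * (Cstar * hN N ^ 3)) with (Cstar * hN N ^ 2 * (INR N * hN N)) by ring.
    rewrite INR_mul_hN by exact HN.
    assert (Hh1 : hN N <= 1).
    { pose proof (INR_mul_hN N HN). pose proof (le_INR 1 N HN). simpl in *. nra. }
    assert (hN N ^ 2 <= 1) by (rewrite <- (pow1 2); apply pow_incr; lra). nra.
Qed.

Lemma off_singular_bound n N Or g u uh Cstar Bu :
  (0 < n)%nat -> (1 <= N)%nat -> 0 <= Cstar ->
  (forall x, cube_closed n x -> Rabs (u x) <= Bu) -> (forall x, cube_bdry n x -> u x = g x) ->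
  in_Brho n N Or g u (Cstar * Rpower (hN N) (2 + INR n / 2)) uh ->
  forall k, Omh n N k -> ~ Oms n N Or k -> Rabs (uh k) <= Bu + Cstar.
Proof.
  intros Hn HN HC Hu Hug HB k Hk Hns.
  pose proof (Hu _ (Omh_cube_closed n N k HN Hk)) as Huk.
  destruct (classic (Omh0 n N k)) as [Hk0|Hk0].
  - assert (Hr : Omr0 n N Or k) by (apply NNPP; intro Hr; apply Hns; split; assumption).
    pose proof (regular_error_bound n N Or g u uh Cstar Hn HN HC HB k (proj1 Hr)).
    pose proof (Rabs_triang (uh k - rh N u k) (rh N u k)). unfold rh in *.
    replace (uh k - u (xpt N k) + u (xpt N k)) with (uh k) in * by ring. lra.
  - destruct HB as [_ [Hbd _]]. rewrite Hbd by (split; assumption). unfold rh.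
    rewrite <- Hug by (apply dOmh_cube_bdry; [exact HN|split; assumption]). lra.
Qed.

Lemma Fh_singular n N Or f v k :
  Oms n N Or k -> Fh n N Or f v k = 0 -> Ms_plus n N v k = f (xpt N k).
Proof.
  intros Hk HF. unfold Fh in HF.
  destruct (excluded_middle_informative _); [lra|contradiction].
Qed.

(* [M_s^+] is at most the product over the coordinate basis, which vanishes
   unless every coordinate second difference is positive. *)
Lemma singular_convex_direction n N Or f uh k :
  (0 < n)%nat -> (1 <= N)%nat -> 0 < f (xpt N k) ->
  Oms n N Or k -> Fh n N Or f uh k = 0 ->
  exists a, Omh n N (vadd k a) /\ Omh n N (vsub k a) /\ 2 * uh k < uh (vadd k a) + uh (vsub k a).
Proof.
  intros Hn HN Hf Hk HF.
  assert (Hal : Wh n N k (std_basis n)) by exact (std_basis_Wh n N k (proj1 Hk)).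
  assert (Ha : In (unit_gpt n 0) (std_basis n)) by (apply in_map, in_seq; lia).
  destruct (Wh_In n N k _ _ Hal Ha) as [_ [Hdot [Hp Hm]]].
  exists (unit_gpt n 0). split; [exact Hp|split; [exact Hm|]].
  rewrite <- (sd2_pos_iff N uh k _ (hN_pos N HN) Hdot).
  apply (Ms_plus_pos_sd2_pos n N uh k (std_basis n)); [exact (proj1 Hk)| |exact Hal|exact Ha].
  rewrite (Fh_singular n N Or f uh k Hk HF). exact Hf.
Qed.

(* If every admissible second difference of [uh] were at least [2A], every
   product in the infimum defining [M_s^+] would be at least [(2A)^n]. *)
Lemma singular_concave_direction n N Or f uh k A :
  (1 <= N)%nat -> 0 <= A -> f (xpt N k) < (2 * A) ^ n ->
  Oms n N Or k -> Fh n N Or f uh k = 0 ->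
  exists a, Omh n N (vadd k a) /\ Omh n N (vsub k a) /\
    let w p := A * sqn (xpt N p) - uh p in 2 * w k < w (vadd k a) + w (vsub k a).
Proof.
  intros HN HA Hf Hk HF.
  rewrite <- (Fh_singular n N Or f uh k Hk HF) in Hf.
  destruct (Ms_plus_lt_pow n N uh k (2 * A) (proj1 Hk) ltac:(lra) Hf) as [al [a [Hal [Ha Hsd]]]].
  destruct (Wh_In n N k al a Hal Ha) as [Hlen [Hdot [Hp Hm]]].
  exists a. split; [exact Hp|split; [exact Hm|]].
  pose proof (hN_pos N HN) as Hh.
  cbv zeta. rewrite <- (sd2_pos_iff N _ k a Hh Hdot).
  rewrite sd2_quadratic_sub; [lra| |lra|lia].
  destruct Hk as [[Hkl _] _]. congruence.
Qed.

Theorem mainTheorem4 :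
  forall (n : nat) (f g u : pt -> R) (Or : pt -> Prop),
    (2 <= n)%nat ->
    cont_on (cube_closed n) f ->
    (forall x, cube_closed n x -> 0 < f x) ->
    cont_on (cube_bdry n) g ->
    (exists gtil, cont_on (cube_closed n) gtil /\ convex_on (cube_closed n) gtil /\
                (forall x, cube_bdry n x -> gtil x = g x)) ->
    convex_visc_solution n f g u ->
    (forall x, Or x -> cube_open n x) ->
    open_in_Rn n Or ->
    convex_set Or ->
    (forall x, Or x -> exists delta, 0 < delta /\ C2_on n (eball n x delta) u) ->
    forall Cstar : R, 0 < Cstar ->
    exists C : R, 0 < C /\
    exists h0 : R, 0 < h0 /\
    forall N : nat, (1 <= N)%nat -> hN N < h0 ->
    forall uh : mesh,
      (forall k, Omh0 n N k -> Fh n N Or f uh k = 0) ->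
      in_Brho n N Or g u (Cstar * Rpower (hN N) (2 + INR n / 2)) uh ->
      forall k, Omh0 n N k -> Rabs (uh k) <= C.
Proof.
  (* Of [u] only continuity and the boundary values are used; the remaining
     hypotheses serve the existence of [uh], which is assumed here. *)
  intros n f g u Or Hn Hfc Hfpos _ _ [Hucont [_ [_ [_ Hug]]]] _ _ _ _ Cstar HCstar.
  destruct (cont_on_cube_bounded n f Hfc) as [Bf [HBf0 HBf]].
  destruct (cont_on_cube_bounded n u Hucont) as [Bu [HBu0 HBu]].
  set (A := (Bf + 1) / 2).
  assert (HA : 1 <= 2 * A) by (unfold A; lra).
  assert (Hsqn : forall N k, (1 <= N)%nat -> Omh n N k -> 0 <= A * sqn (xpt N k) <= A * INR n)
    by (intros N k HN Hk;
        pose proof (sqn_cube_closed n _ (Omh_cube_closed n N k HN Hk)); split; nra).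
  exists (Bu + Cstar + A * INR n). split; [pose proof (pos_INR n); nra|].
  exists 1. split; [lra|]. intros N HN _ uh HF HB k Hk.
  assert (Hf : forall p, Omh n N p -> 0 < f (xpt N p) < (2 * A) ^ n).
  { intros p Hp. pose proof (Omh_cube_closed n N p HN Hp) as Hx.
    pose proof (Rle_pow (2 * A) 1 n HA ltac:(lia)). pose proof (Rle_abs (f (xpt N p))).
    pose proof (HBf _ Hx). split; [exact (Hfpos _ Hx)|]. unfold A in *. simpl in *. lra. }
  pose proof (off_singular_bound n N Or g u uh Cstar Bu ltac:(lia) HN (Rlt_le _ _ HCstar)
                HBu Hug HB) as Hoff.
  assert (Hup : uh k <= Bu + Cstar).
  { apply (grid_max_principle n N uh (Oms n N Or)); [| |exact (Omh0_Omh n N k Hk)].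
    - intros p Hp Hs. pose proof (Hoff p Hp Hs). pose proof (Rle_abs (uh p)). lra.
    - intros p Hp Hs. apply (singular_convex_direction n N Or f);
        [lia|exact HN|apply Hf, Hp|exact Hs|apply HF, Hs]. }
  assert (Hlow : A * sqn (xpt N k) - uh k <= A * INR n + (Bu + Cstar)).
  { apply (grid_max_principle n N (fun p => A * sqn (xpt N p) - uh p) (Oms n N Or));
      [| |exact (Omh0_Omh n N k Hk)].
    - intros p Hp Hs. pose proof (Hoff p Hp Hs). pose proof (Rle_abs (- uh p)).
      rewrite Rabs_Ropp in *. pose proof (Hsqn N p HN Hp). lra.
    - intros p Hp Hs. apply (singular_concave_direction n N Or f uh p A);
        [exact HN|unfold A; lra|apply Hf, Hp|exact Hs|apply HF, Hs]. }
  pose proof (Hsqn N k HN (Omh0_Omh n N k Hk)). apply Rabs_le. lra.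
Qed.
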